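(* Over $\mathsf{RCA}_0$, the Additive Ramsey Theorem implies $\Sigma^0_2\text{-}\mathsf{IND}$.
   Context: $\mathsf{RCA}_0$: second-order arithmetic with $\Delta^0_1$-comprehension and $\Sigma^0_1$-induction. $\Sigma^0_2\text{-}\mathsf{IND}$: the induction scheme for $\Sigma^0_2$ formulae with parameters. Additive Ramsey Theorem: for every finite semigroup $(S,* )$ and every colouring $C:[\mathbb{N}]^2\to S$ such that $C(i,j)*C(j,k)=C(i,k)$ for all $i<j<k$, there is an infinite set $I\subseteq\mathbb{N}$ and $a\in S$ with $C(i,j)=a$ for all $i<j$ in $I$. *)

(* Semantic (Henkin-model) formalization of second-order
   arithmetic L2, following Simpson, "Subsystems of Second Order Arithmetic". *)

Record L2structure : Type := {
  Num : Type;
  SetS : Type;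
  zero : Num;
  one : Num;
  plus : Num -> Num -> Num;
  times : Num -> Num -> Num;
  lt : Num -> Num -> Prop;
  mem : Num -> SetS -> Prop
}.

Definition scons {A : Type} (a : A) (e : nat -> A) : nat -> A :=
  fun n => match n with 0 => a | S k => e k end.

(** * Arithmetical formulas of L2 (number variables de Bruijn, set parameters
    indexed by nat). Set quantifiers are not needed for the schemas below. *)
Inductive term : Type :=
| tvar : nat -> term
| tzero : term
| tone : term
| tplus : term -> term -> term
| ttimes : term -> term -> term.

Inductive formula : Type :=
| fEq : term -> term -> formula
| fLt : term -> term -> formula
| fMem : term -> nat -> formula
| fNot : formula -> formula
| fAnd : formula -> formula -> formula
| fOr : formula -> formula -> formula
| fImp : formula -> formula -> formula
| fAllN : formula -> formula
| fExN : formula -> formula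
| fBAllN : term -> formula -> formula      (* forall n < t, phi (t outside the binder) *)
| fBExN : term -> formula -> formula.

Fixpoint teval (M : L2structure) (e : nat -> Num M) (t : term) : Num M :=
  match t with
  | tvar n => e n
  | tzero => zero M
  | tone => one M
  | tplus a b => plus M (teval M e a) (teval M e b)
  | ttimes a b => times M (teval M e a) (teval M e b)
  end.

Fixpoint sat (M : L2structure) (e : nat -> Num M) (E : nat -> SetS M)
  (phi : formula) : Prop :=
  match phi with
  | fEq a b => teval M e a = teval M e b
  | fLt a b => lt M (teval M e a) (teval M e b)
  | fMem t k => mem M (teval M e t) (E k)
  | fNot p => ~ sat M e E p
  | fAnd p q => sat M e E p /\ sat M e E q
  | fOr p q => sat M e E p \/ sat M e E q
  | fImp p q => sat M e E p -> sat M e E q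
  | fAllN p => forall m, sat M (scons m e) E p
  | fExN p => exists m, sat M (scons m e) E p
  | fBAllN t p => forall m, lt M m (teval M e t) -> sat M (scons m e) E p
  | fBExN t p => exists m, lt M m (teval M e t) /\ sat M (scons m e) E p
  end.

Inductive is_Delta0 : formula -> Prop :=
| D0Eq a b : is_Delta0 (fEq a b)
| D0Lt a b : is_Delta0 (fLt a b)
| D0Mem t k : is_Delta0 (fMem t k)
| D0Not p : is_Delta0 p -> is_Delta0 (fNot p)
| D0And p q : is_Delta0 p -> is_Delta0 q -> is_Delta0 (fAnd p q)
| D0Or p q : is_Delta0 p -> is_Delta0 q -> is_Delta0 (fOr p q)
| D0Imp p q : is_Delta0 p -> is_Delta0 q -> is_Delta0 (fImp p q)
| D0BAll t p : is_Delta0 p -> is_Delta0 (fBAllN t p)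
| D0BEx t p : is_Delta0 p -> is_Delta0 (fBExN t p).

Fixpoint is_Sigma (k : nat) (phi : formula) : Prop :=
  match k with
  | 0 => is_Delta0 phi
  | S j => match phi with fExN p => is_Pi j p | _ => False end
  end
with is_Pi (k : nat) (phi : formula) : Prop :=
  match k with
  | 0 => is_Delta0 phi
  | S j => match phi with fAllN p => is_Sigma j p | _ => False end
  end.

Definition BasicAxioms (M : L2structure) : Prop :=
  (forall n, plus M n (one M) <> zero M) /\
  (forall m n, plus M m (one M) = plus M n (one M) -> m = n) /\
  (forall m, plus M m (zero M) = m) /\
  (forall m n, plus M m (plus M n (one M)) = plus M (plus M m n) (one M)) /\
  (forall m, times M m (zero M) = zero M) /\
  (forall m n, times M m (plus M n (one M)) = plus M (times M m n) m) /\
  (forall m, ~ lt M m (zero M)) /\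
  (forall m n, lt M m (plus M n (one M)) <-> (lt M m n \/ m = n)).

(** Sigma^0_k induction scheme (variable 0 is the induction variable; all
    other number and set variables are parameters). *)
Definition SigmaIND (k : nat) (M : L2structure) : Prop :=
  forall phi, is_Sigma k phi ->
  forall (e : nat -> Num M) (E : nat -> SetS M),
    sat M (scons (zero M) e) E phi ->
    (forall m, sat M (scons m e) E phi -> sat M (scons (plus M m (one M)) e) E phi) ->
    forall m, sat M (scons m e) E phi.

Definition Delta01CA (M : L2structure) : Prop :=
  forall phi psi, is_Sigma 1 phi -> is_Pi 1 psi ->
  forall (e : nat -> Num M) (E : nat -> SetS M),
    (forall m, sat M (scons m e) E phi <-> sat M (scons m e) E psi) ->
    exists X : SetS M, forall m, mem M m X <-> sat M (scons m e) E phi.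

Definition RCA0 (M : L2structure) : Prop :=
  BasicAxioms M /\ SigmaIND 1 M /\ Delta01CA M.

Section ART.
Variable M : L2structure.

Definition le (m n : Num M) : Prop := lt M m n \/ m = n.

(* Cantor pairing: p = (x+y)(x+y+1)/2 + y, i.e. 2p = (x+y)(x+y+1) + 2y *)
Definition ispair (x y p : Num M) : Prop :=
  plus M p p = plus M (times M (plus M x y) (plus M (plus M x y) (one M))) (plus M y y).

Definition graph3 (R : SetS M) (x y z : Num M) : Prop :=
  exists p q, ispair x y p /\ ispair p z q /\ mem M q R.

Definition FiniteSet (U : SetS M) : Prop :=
  exists b, forall x, mem M x U -> lt M x b.

Definition FinSemigroup (U Op : SetS M) : Prop :=
  FiniteSet U /\
  (forall a b, mem M a U -> mem M b U -> exists c, mem M c U /\ graph3 Op a b c) /\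
  (forall a b c c', mem M a U -> mem M b U ->
      graph3 Op a b c -> graph3 Op a b c' -> c = c') /\
  (forall a b c ab bc abc abc', mem M a U -> mem M b U -> mem M c U ->
      graph3 Op a b ab -> graph3 Op ab c abc ->
      graph3 Op b c bc -> graph3 Op a bc abc' -> abc = abc').

Definition Colouring (U C : SetS M) : Prop :=
  (forall i j, lt M i j -> exists c, mem M c U /\ graph3 C i j c) /\
  (forall i j c c', lt M i j -> graph3 C i j c -> graph3 C i j c' -> c = c').

Definition Additive (Op C : SetS M) : Prop :=
  forall i j k a b d, lt M i j -> lt M j k ->
    graph3 C i j a -> graph3 C j k b -> graph3 C i k d -> graph3 Op a b d.

Definition Infinite (I : SetS M) : Prop :=
  forall n, exists m, le n m /\ mem M m I.

Definition ART : Prop :=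
  forall U Op C : SetS M,
    FinSemigroup U Op -> Colouring U C -> Additive Op C ->
    exists (I : SetS M) (a : Num M),
      mem M a U /\ Infinite I /\
      (forall i j, mem M i I -> mem M j I -> lt M i j -> graph3 C i j a).
End ART.

From Pilot Require Import Defs.
From Stdlib Require Import List Classical FunctionalExtensionality Setoid Ring.
Import ListNotations.

(* Suppose phi(x) = exists y, forall z, theta(x,y,z) holds at 0 and is inductive.  For each x
   let g_s(x) be the least y < s with forall z < s, theta(x,y,z) (or s if there is none).
   Then phi(x) holds iff g_s(x) increases at only boundedly many stages s.  Given any a,
   colour a pair i < j by the least x <= a whose approximation g(x) increases at some stage
   in [i, j), or by a + 1 if there is none.  Colours live in {0, ..., a + 1}, and the
   colouring is additive for min.  If c is the colour of an infinite homogeneous set, then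
   every x < c stabilises, so phi(x), whereas c itself, if c <= a, increases infinitely
   often, so not phi(c); since phi is inductive this forces c = a + 1, whence phi(a). *)

Fixpoint prepend {A} (l : list A) (e : nat -> A) : nat -> A :=
  match l with [] => e | x :: l' => scons x (prepend l' e) end.

Definition up_ren (s : nat -> nat) : nat -> nat :=
  fun n => match n with 0 => 0 | S k => S (s k) end.

Fixpoint ren_term (s : nat -> nat) (t : term) : term :=
  match t with
  | tvar n => tvar (s n) | tzero => tzero | tone => tone
  | tplus a b => tplus (ren_term s a) (ren_term s b)
  | ttimes a b => ttimes (ren_term s a) (ren_term s b) end.

Fixpoint ren_formula (s : nat -> nat) (f : formula) : formula :=
  match f with
  | fEq a b => fEq (ren_term s a) (ren_term s b)
  | fLt a b => fLt (ren_term s a) (ren_term s b)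
  | fMem t k => fMem (ren_term s t) k
  | fNot p => fNot (ren_formula s p)
  | fAnd p q => fAnd (ren_formula s p) (ren_formula s q)
  | fOr p q => fOr (ren_formula s p) (ren_formula s q)
  | fImp p q => fImp (ren_formula s p) (ren_formula s q)
  | fAllN p => fAllN (ren_formula (up_ren s) p)
  | fExN p => fExN (ren_formula (up_ren s) p)
  | fBAllN t p => fBAllN (ren_term s t) (ren_formula (up_ren s) p)
  | fBExN t p => fBExN (ren_term s t) (ren_formula (up_ren s) p)
  end.

Lemma teval_ren M e s t : teval M e (ren_term s t) = teval M (fun n => e (s n)) t.
Proof. induction t; simpl; congruence. Qed.

Lemma scons_up_ren {A} (m : A) e s :
  (fun n => scons m e (up_ren s n)) = scons m (fun n => e (s n)).
Proof. extensionality n; destruct n; reflexivity. Qed.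

Lemma sat_ren M f : forall e E s,
  sat M e E (ren_formula s f) <-> sat M (fun n => e (s n)) E f.
Proof.
  induction f; intros e E s; simpl; rewrite ?teval_ren; try tauto;
  try (rewrite IHf; tauto); try (rewrite IHf1, IHf2; tauto);
  setoid_rewrite IHf; setoid_rewrite scons_up_ren; reflexivity.
Qed.

Lemma Delta0_ren f s : is_Delta0 f -> is_Delta0 (ren_formula s f).
Proof. intros H; revert s; induction H; intros; simpl; constructor; auto. Qed.

(* [reindex ps K] sends variable n < length ps to the n-th entry of ps, and the later
   variables to K, K + 1, ...: it plugs a formula into a context where its first free
   variables sit at positions ps and its parameters start at position K. *)
Definition reindex (ps : list nat) (K : nat) (n : nat) : nat :=
  nth n ps (K + (n - length ps)).

Lemma env_reindex {A} (env : nat -> A) ps K :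
  (fun n => env (reindex ps K n)) = prepend (map env ps) (fun k => env (K + k)).
Proof.
  extensionality n. unfold reindex. revert n; induction ps; intros n; simpl.
  - destruct n; reflexivity.
  - destruct n; simpl; auto.
Qed.

Lemma sat_reindex M e E ps K f :
  sat M e E (ren_formula (reindex ps K) f) <->
  sat M (prepend (map e ps) (fun k => e (K + k))) E f.
Proof. rewrite sat_ren, env_reindex; reflexivity. Qed.

(** * Arithmetic from Sigma^0_1 induction *)

Section Development.

Variable M : L2structure.
Hypothesis HB : BasicAxioms M.
Hypothesis HI : SigmaIND 1 M.
Variable E : nat -> SetS M.

Local Notation z0 := (zero M).
Local Notation o1 := (one M).
Local Infix "⊕" := (plus M) (at level 50, left associativity).
Local Infix "⊗" := (times M) (at level 40, left associativity).
Local Infix "≺" := (lt M) (at level 70).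
Local Notation le := (le M).
Local Notation ispair := (ispair M).

Lemma add_0_r m : m ⊕ z0 = m. Proof. apply HB. Qed.
Lemma add_succ_r m n : m ⊕ (n ⊕ o1) = (m ⊕ n) ⊕ o1. Proof. apply HB. Qed.
Lemma mul_0_r m : m ⊗ z0 = z0. Proof. apply HB. Qed.
Lemma mul_succ_r m n : m ⊗ (n ⊕ o1) = m ⊗ n ⊕ m. Proof. apply HB. Qed.
Lemma nlt_0_r m : ~ m ≺ z0. Proof. apply HB. Qed.
Lemma lt_succ_disj m n : m ≺ n ⊕ o1 <-> m ≺ n \/ m = n. Proof. apply HB. Qed.

Lemma Sigma1_induction (F : formula) (HF : is_Delta0 F) (tl : nat -> Num M)
  (P : Num M -> Prop) :
  (forall n, (exists w, sat M (scons w (scons n tl)) E F) <-> P n) ->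
  P z0 -> (forall n, P n -> P (n ⊕ o1)) -> forall n, P n.
Proof.
  intros HP H0 HS n. apply HP.
  apply (HI (fExN F) HF tl E); simpl.
  - apply HP; auto.
  - intros m Hm. apply HP, HS, HP, Hm.
Qed.

(* Variable 0 of [F] is a dummy, so that [F] is a Sigma^0_1 formula [fExN F]. *)
Lemma Delta0_induction (F : formula) (HF : is_Delta0 F) (tl : nat -> Num M)
  (P : Num M -> Prop) :
  (forall w n, sat M (scons w (scons n tl)) E F <-> P n) ->
  P z0 -> (forall n, P n -> P (n ⊕ o1)) -> forall n, P n.
Proof.
  intros HP. apply (Sigma1_induction F HF tl). intros n; split.
  - intros [w Hw]. exact (proj1 (HP w n) Hw).
  - intros H. exists z0. apply HP, H.
Qed.

Ltac prove_Delta0 := repeat (first [apply Delta0_ren | constructor | assumption]).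

Ltac sat_simpl := cbn; repeat setoid_rewrite sat_reindex; cbn.

Ltac ind_Sigma1 F tl := match goal with |- forall x, @?P x =>
  apply (Sigma1_induction F ltac:(prove_Delta0) tl P) end.

Ltac ind_Delta0 F tl := match goal with |- forall x, @?P x =>
  apply (Delta0_induction F ltac:(prove_Delta0) tl P) end;
  [try (intros ?w ?n; sat_simpl; reflexivity) | | ].

Definition no_params : nat -> Num M := fun _ => z0.

Lemma add_0_l n : z0 ⊕ n = n.
Proof.
  revert n. ind_Delta0 (fEq (tplus tzero (tvar 1)) (tvar 1)) no_params.
  - apply add_0_r.
  - intros n IH. rewrite add_succ_r, IH; reflexivity.
Qed.

Lemma add_succ_l m n : (m ⊕ o1) ⊕ n = (m ⊕ n) ⊕ o1.
Proof.
  revert n.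
  ind_Delta0 (fEq (tplus (tplus (tvar 2) tone) (tvar 1)) (tplus (tplus (tvar 2) (tvar 1)) tone))
    (scons m no_params).
  - rewrite !add_0_r; reflexivity.
  - intros n IH. rewrite !add_succ_r, IH; reflexivity.
Qed.

Lemma add_comm m n : m ⊕ n = n ⊕ m.
Proof.
  revert n.
  ind_Delta0 (fEq (tplus (tvar 2) (tvar 1)) (tplus (tvar 1) (tvar 2))) (scons m no_params).
  - rewrite add_0_r, add_0_l; reflexivity.
  - intros n IH. rewrite add_succ_r, IH, add_succ_l; reflexivity.
Qed.

Lemma add_assoc m n k : (m ⊕ n) ⊕ k = m ⊕ (n ⊕ k).
Proof.
  revert k.
  ind_Delta0 (fEq (tplus (tplus (tvar 2) (tvar 3)) (tvar 1)) (tplus (tvar 2) (tplus (tvar 3) (tvar 1))))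
    (scons m (scons n no_params)).
  - rewrite !add_0_r; reflexivity.
  - intros k IH. rewrite !add_succ_r, IH; reflexivity.
Qed.

Lemma mul_0_l n : z0 ⊗ n = z0.
Proof.
  revert n. ind_Delta0 (fEq (ttimes tzero (tvar 1)) tzero) no_params.
  - apply mul_0_r.
  - intros n IH. rewrite mul_succ_r, IH, add_0_r; reflexivity.
Qed.

Lemma mul_succ_l m n : (m ⊕ o1) ⊗ n = m ⊗ n ⊕ n.
Proof.
  revert n.
  ind_Delta0 (fEq (ttimes (tplus (tvar 2) tone) (tvar 1)) (tplus (ttimes (tvar 2) (tvar 1)) (tvar 1)))
    (scons m no_params).
  - rewrite !mul_0_r, add_0_r; reflexivity.
  - intros n IH. rewrite !mul_succ_r, IH, !add_assoc. f_equal.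
    rewrite !add_succ_r, (add_comm n m); reflexivity.
Qed.

Lemma mul_comm m n : m ⊗ n = n ⊗ m.
Proof.
  revert n.
  ind_Delta0 (fEq (ttimes (tvar 2) (tvar 1)) (ttimes (tvar 1) (tvar 2))) (scons m no_params).
  - rewrite mul_0_r, mul_0_l; reflexivity.
  - intros n IH. rewrite mul_succ_r, IH, mul_succ_l; reflexivity.
Qed.

Lemma mul_add_distr_l m n k : m ⊗ (n ⊕ k) = m ⊗ n ⊕ m ⊗ k.
Proof.
  revert k.
  ind_Delta0 (fEq (ttimes (tvar 2) (tplus (tvar 3) (tvar 1)))
                  (tplus (ttimes (tvar 2) (tvar 3)) (ttimes (tvar 2) (tvar 1))))
    (scons m (scons n no_params)).
  - rewrite add_0_r, mul_0_r, add_0_r; reflexivity.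
  - intros k IH. rewrite add_succ_r, !mul_succ_r, IH, add_assoc; reflexivity.
Qed.

Lemma mul_assoc m n k : (m ⊗ n) ⊗ k = m ⊗ (n ⊗ k).
Proof.
  revert k.
  ind_Delta0 (fEq (ttimes (ttimes (tvar 2) (tvar 3)) (tvar 1)) (ttimes (tvar 2) (ttimes (tvar 3) (tvar 1))))
    (scons m (scons n no_params)).
  - rewrite !mul_0_r; reflexivity.
  - intros k IH. rewrite !mul_succ_r, IH, mul_add_distr_l; reflexivity.
Qed.

Lemma semi_ring : semi_ring_theory z0 o1 (plus M) (times M) eq.
Proof.
  constructor.
  - apply add_0_l.
  - apply add_comm.
  - intros; symmetry; apply add_assoc.
  - intros n. rewrite mul_comm, <- (add_0_l o1), mul_succ_r, mul_0_r, !add_0_l; reflexivity.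
  - apply mul_0_l.
  - apply mul_comm.
  - intros; symmetry; apply mul_assoc.
  - intros n m p. rewrite mul_comm, mul_add_distr_l, (mul_comm p n), (mul_comm p m); reflexivity.
Qed.

Add Ring M_semi_ring : semi_ring.

Lemma lt_succ_diag_r n : n ≺ n ⊕ o1. Proof. apply lt_succ_disj; auto. Qed.

Lemma lt_lt_succ_r m n : m ≺ n -> m ≺ n ⊕ o1. Proof. intros H. apply lt_succ_disj; auto. Qed.

Lemma lt_0_succ n : z0 ≺ n ⊕ o1.
Proof.
  revert n. ind_Delta0 (fLt tzero (tplus (tvar 1) tone)) no_params.
  - apply lt_succ_diag_r.
  - intros n IH. apply lt_lt_succ_r, IH.
Qed.

Lemma zero_or_succ n : n = z0 \/ exists k, n = k ⊕ o1.
Proof.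
  revert n.
  ind_Sigma1 (fOr (fEq (tvar 1) tzero) (fEq (tvar 1) (tplus (tvar 0) tone))) no_params.
  - intros n; simpl; split.
    + intros [w [H|H]]; eauto.
    + intros [H|[k H]]; [exists z0; auto | eauto].
  - auto.
  - intros n _. right; eauto.
Qed.

Lemma lt_trans m n k : m ≺ n -> n ≺ k -> m ≺ k.
Proof.
  revert k.
  ind_Delta0 (fImp (fLt (tvar 2) (tvar 3)) (fImp (fLt (tvar 3) (tvar 1)) (fLt (tvar 2) (tvar 1))))
    (scons m (scons n no_params)).
  - intros _ H; elim (nlt_0_r _ H).
  - intros k IH H1 H2. apply lt_succ_disj. apply lt_succ_disj in H2.
    destruct H2 as [H2|H2]; subst; auto.
Qed.

Lemma lt_succ_l m n : m ≺ n -> m ⊕ o1 ≺ n \/ m ⊕ o1 = n.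
Proof.
  revert n.
  ind_Delta0 (fImp (fLt (tvar 2) (tvar 1))
               (fOr (fLt (tplus (tvar 2) tone) (tvar 1)) (fEq (tplus (tvar 2) tone) (tvar 1))))
    (scons m no_params).
  - intros H; elim (nlt_0_r _ H).
  - intros n IH H. apply lt_succ_disj in H. destruct H as [H|H].
    + left. apply lt_succ_disj. destruct (IH H); auto.
    + subst. auto.
Qed.

Lemma lt_irrefl n : ~ n ≺ n.
Proof.
  revert n. ind_Delta0 (fNot (fLt (tvar 1) (tvar 1))) no_params.
  - apply nlt_0_r.
  - intros n IH H. apply lt_succ_disj in H. destruct H as [H|H].
    + apply IH. apply (lt_trans _ _ _ (lt_succ_diag_r n) H).
    + apply IH. pattern n at 2. rewrite <- H. apply lt_succ_diag_r.
Qed.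

Lemma lt_trichotomy m n : m ≺ n \/ m = n \/ n ≺ m.
Proof.
  revert n.
  ind_Delta0 (fOr (fLt (tvar 2) (tvar 1)) (fOr (fEq (tvar 2) (tvar 1)) (fLt (tvar 1) (tvar 2))))
    (scons m no_params).
  - destruct (zero_or_succ m) as [->|[k ->]]; auto. right; right; apply lt_0_succ.
  - intros n [H|[H|H]].
    + left. apply lt_lt_succ_r; auto.
    + left. subst. apply lt_succ_diag_r.
    + destruct (lt_succ_l _ _ H); auto.
Qed.

Lemma lt_asymm m n : m ≺ n -> ~ n ≺ m.
Proof. intros H1 H2. apply (lt_irrefl m). eapply lt_trans; eauto. Qed.

Lemma le_refl m : le m m. Proof. right; auto. Qed.

Lemma le_lt_trans m n k : le m n -> n ≺ k -> m ≺ k.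
Proof. intros [H|H] H2; subst; auto. eapply lt_trans; eauto. Qed.

Lemma lt_le_trans m n k : m ≺ n -> le n k -> m ≺ k.
Proof. intros H [H2|H2]; subst; auto. eapply lt_trans; eauto. Qed.

Lemma le_trans m n k : le m n -> le n k -> le m k.
Proof. intros [H|H] H2; subst; auto. left. eapply lt_le_trans; eauto. Qed.

Lemma not_lt_le m n : ~ m ≺ n -> le n m.
Proof.
  intros H. destruct (lt_trichotomy m n) as [H1|[H1|H1]]; [tauto | right; auto | left; auto].
Qed.

Lemma le_not_lt m n : le n m -> ~ m ≺ n.
Proof. intros [H|H] H2; subst. apply (lt_asymm _ _ H H2). apply (lt_irrefl _ H2). Qed.

Lemma le_antisymm m n : le m n -> le n m -> m = n.
Proof. intros [H|H] H2; auto. exfalso; apply (le_not_lt _ _ H2 H). Qed.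

Lemma lt_succ_r m n : m ≺ n ⊕ o1 <-> le m n.
Proof. rewrite lt_succ_disj. unfold Defs.le. tauto. Qed.

Lemma le_succ_l m n : le (m ⊕ o1) n <-> m ≺ n.
Proof.
  split.
  - intros H. eapply lt_le_trans; eauto. apply lt_succ_diag_r.
  - intros H; destruct (lt_succ_l _ _ H); [left|right]; auto.
Qed.

Lemma le_0_l n : le z0 n.
Proof. destruct (zero_or_succ n) as [->|[k ->]]. apply le_refl. left; apply lt_0_succ. Qed.

Lemma succ_lt_mono m n : m ≺ n -> m ⊕ o1 ≺ n ⊕ o1.
Proof. intros H. apply lt_succ_disj. destruct (lt_succ_l _ _ H); auto. Qed.

Lemma add_lt_mono_r m n k : m ≺ n -> m ⊕ k ≺ n ⊕ k.
Proof.
  revert k.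
  ind_Delta0 (fImp (fLt (tvar 2) (tvar 3)) (fLt (tplus (tvar 2) (tvar 1)) (tplus (tvar 3) (tvar 1))))
    (scons m (scons n no_params)).
  - intros H; rewrite !add_0_r; auto.
  - intros k IH H. rewrite !add_succ_r. apply succ_lt_mono; auto.
Qed.

Lemma add_lt_mono_l m n k : m ≺ n -> k ⊕ m ≺ k ⊕ n.
Proof. intros H. rewrite (add_comm k m), (add_comm k n). apply add_lt_mono_r; auto. Qed.

Lemma add_cancel_r m n k : m ⊕ k = n ⊕ k -> m = n.
Proof.
  intros H. destruct (lt_trichotomy m n) as [H1|[H1|H1]]; auto; exfalso;
    apply (add_lt_mono_r _ _ k) in H1; rewrite H in H1; apply (lt_irrefl _ H1).
Qed.

Lemma le_add_r m k : le m (m ⊕ k).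
Proof.
  destruct (le_0_l k) as [H|H].
  - left. rewrite <- (add_0_r m) at 1. apply add_lt_mono_l; auto.
  - subst. rewrite add_0_r. apply le_refl.
Qed.

Lemma add_lt_le_mono a b c d : a ≺ b -> le c d -> a ⊕ c ≺ b ⊕ d.
Proof.
  intros H [H2|H2].
  - eapply lt_trans. apply add_lt_mono_r; eauto. apply add_lt_mono_l; auto.
  - subst. apply add_lt_mono_r; auto.
Qed.

Lemma add_le_mono a b c d : le a b -> le c d -> le (a ⊕ c) (b ⊕ d).
Proof.
  intros [H|H] H2. left; apply add_lt_le_mono; auto.
  subst. destruct H2 as [H2|H2]; [left; apply add_lt_mono_l; auto | subst; apply le_refl].
Qed.

Lemma lt_exists_add m n : m ≺ n -> exists k, n = m ⊕ k ⊕ o1.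
Proof.
  revert n.
  ind_Sigma1 (fImp (fLt (tvar 2) (tvar 1)) (fEq (tvar 1) (tplus (tplus (tvar 2) (tvar 0)) tone)))
    (scons m no_params).
  - intros n; simpl; split.
    + intros [w Hw] H. exists w. auto.
    + intros H. destruct (classic (m ≺ n)) as [H1|H1].
      * destruct (H H1) as [k Hk]. exists k. auto.
      * exists z0. tauto.
  - intros H; elim (nlt_0_r _ H).
  - intros n IH H. apply lt_succ_disj in H. destruct H as [H|H].
    + destruct (IH H) as [k Hk]. exists (k ⊕ o1). rewrite Hk. ring.
    + subst. exists z0. ring.
Qed.

Lemma le_exists_add m n : le m n -> exists k, n = m ⊕ k.
Proof.
  intros [H|H].
  - destruct (lt_exists_add _ _ H) as [k Hk]. exists (k ⊕ o1). rewrite Hk; ring.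
  - subst. exists z0. ring.
Qed.

Lemma double_le_cancel u v : le (u ⊕ u) (v ⊕ v) -> le u v.
Proof.
  intros H. apply not_lt_le. intros Hvu.
  apply (le_not_lt _ _ H). apply add_lt_le_mono; auto. left; auto.
Qed.

Lemma double_inj u v : u ⊕ u = v ⊕ v -> u = v.
Proof. intros H. apply le_antisymm; apply double_le_cancel; rewrite H; apply le_refl. Qed.

Lemma le_mul_diag_r n : le n (n ⊗ n).
Proof.
  destruct (zero_or_succ n) as [->|[k ->]]. rewrite mul_0_r. apply le_refl.
  rewrite mul_succ_r, (add_comm ((k ⊕ o1) ⊗ k)). apply le_add_r.
Qed.

(** * Cantor pairing *)

Lemma even_mul_succ n : exists k, n ⊗ (n ⊕ o1) = k ⊕ k.
Proof.
  revert n. ind_Sigma1 (fEq (ttimes (tvar 1) (tplus (tvar 1) tone)) (tplus (tvar 0) (tvar 0))) no_params.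
  - intros n; simpl; reflexivity.
  - exists z0. ring.
  - intros n [k Hk]. exists (k ⊕ n ⊕ o1).
    transitivity (n ⊗ (n ⊕ o1) ⊕ (n ⊕ o1) ⊕ (n ⊕ o1)). ring. rewrite Hk. ring.
Qed.

Lemma ispair_exists x y : exists p, ispair x y p.
Proof.
  destruct (even_mul_succ (x ⊕ y)) as [k Hk]. exists (k ⊕ y). unfold Defs.ispair.
  rewrite Hk. ring.
Qed.

Lemma ispair_le x y p : ispair x y p -> le x p /\ le y p.
Proof.
  unfold Defs.ispair. intros H.
  assert (Hx : le x ((x ⊕ y) ⊗ (x ⊕ y))) by (eapply le_trans; [apply le_add_r | apply le_mul_diag_r]).
  destruct (le_exists_add _ _ Hx) as [d Hd].
  split; apply double_le_cancel.
  - replace (p ⊕ p) with ((x ⊕ x) ⊕ (d ⊕ y ⊕ y ⊕ y)). apply le_add_r.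
    rewrite H. transitivity ((x ⊕ y) ⊗ (x ⊕ y) ⊕ (x ⊕ y) ⊕ (y ⊕ y)). rewrite Hd. ring. ring.
  - replace (p ⊕ p) with ((y ⊕ y) ⊕ ((x ⊕ y) ⊗ (x ⊕ y ⊕ o1))). apply le_add_r.
    rewrite H. ring.
Qed.

(* Codes on the diagonal x + y = n lie in [n(n+1)/2, (n+1)(n+2)/2). *)
Lemma ispair_diagonal x y x' y' p :
  ispair x y p -> ispair x' y' p -> ~ x ⊕ y ≺ x' ⊕ y'.
Proof.
  unfold Defs.ispair. intros H H' Hlt.
  set (n := x ⊕ y) in *. set (n' := x' ⊕ y') in *.
  destruct (lt_exists_add _ _ Hlt) as [k Hk].
  assert (Hy : le (y ⊕ y) (n ⊕ n))
    by (apply add_le_mono; unfold n; rewrite (add_comm x y); apply le_add_r).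
  assert (Hupper : n ⊗ (n ⊕ o1) ⊕ (y ⊕ y) ≺ (n ⊕ o1) ⊗ (n ⊕ o1 ⊕ o1)).
  { replace ((n ⊕ o1) ⊗ (n ⊕ o1 ⊕ o1)) with (n ⊗ (n ⊕ o1) ⊕ ((n ⊕ n) ⊕ o1 ⊕ o1)) by ring.
    rewrite !(add_comm (n ⊗ (n ⊕ o1))).
    apply add_lt_le_mono; [|apply le_refl]. eapply le_lt_trans. exact Hy.
    rewrite add_assoc, <- (add_0_r (n ⊕ n)) at 1. apply add_lt_mono_l, lt_0_succ. }
  assert (Hlower : le ((n ⊕ o1) ⊗ (n ⊕ o1 ⊕ o1)) (p ⊕ p)).
  { rewrite H', Hk.
    replace ((n ⊕ k ⊕ o1) ⊗ (n ⊕ k ⊕ o1 ⊕ o1) ⊕ (y' ⊕ y')) with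
      ((n ⊕ o1) ⊗ (n ⊕ o1 ⊕ o1) ⊕ (k ⊗ (n ⊕ o1 ⊕ n ⊕ o1 ⊕ k ⊕ o1) ⊕ (y' ⊕ y'))) by ring.
    apply le_add_r. }
  rewrite <- H in Hupper. apply (lt_irrefl (p ⊕ p)). eapply lt_le_trans; eauto.
Qed.

Lemma ispair_inj x y x' y' p : ispair x y p -> ispair x' y' p -> x = x' /\ y = y'.
Proof.
  intros H H'.
  assert (Hn : x ⊕ y = x' ⊕ y').
  { destruct (lt_trichotomy (x ⊕ y) (x' ⊕ y')) as [h|[h|h]]; auto; exfalso.
    - apply (ispair_diagonal _ _ _ _ _ H H' h).
    - apply (ispair_diagonal _ _ _ _ _ H' H h). }
  unfold Defs.ispair in *. rewrite H, Hn, !(add_comm ((x' ⊕ y') ⊗ _)) in H'.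
  apply add_cancel_r, double_inj in H'. subst. split; auto.
  apply add_cancel_r in Hn. auto.
Qed.

Lemma Delta0_least (F : formula) (HF : is_Delta0 F) (tl : nat -> Num M) (b : Num M) :
  (exists y, y ≺ b /\ sat M (scons y tl) E F) ->
  exists y, sat M (scons y tl) E F /\ forall y', y' ≺ y -> ~ sat M (scons y' tl) E F.
Proof.
  intros [y0 [Hy0 Fy0]].
  assert (Hleast : forall n, (forall y, y ≺ n -> ~ sat M (scons y tl) E F) \/
     exists y, y ≺ n /\ sat M (scons y tl) E F /\ forall y', y' ≺ y -> ~ sat M (scons y' tl) E F).
  { ind_Delta0 (fOr (fBAllN (tvar 1) (fNot (ren_formula (reindex [0] 3) F)))
                    (fBExN (tvar 1) (fAnd (ren_formula (reindex [0] 3) F)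
                                         (fBAllN (tvar 0) (fNot (ren_formula (reindex [0] 4) F)))))) tl.
    - left. intros y H. elim (nlt_0_r _ H).
    - intros n [H|H].
      + destruct (classic (sat M (scons n tl) E F)) as [Fn|Fn].
        * right. exists n. split. apply lt_succ_diag_r. split; auto.
        * left. intros y Hy. apply lt_succ_disj in Hy. destruct Hy as [Hy|Hy]; [auto|subst; auto].
      + right. destruct H as [y [Hy R]]. exists y. split; auto. apply lt_lt_succ_r; auto. }
  destruct (Hleast b) as [H|[y [_ H]]]. elim (H y0 Hy0 Fy0). exists y; auto.
Qed.

Section Comprehension.

Hypothesis HD : Delta01CA M.

(* Variable 0 of [F] is a dummy, so that [F] is both Sigma^0_1 and Pi^0_1. *)
Lemma Delta0_comprehension (F : formula) (HF : is_Delta0 F) (tl : nat -> Num M)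
  (P : Num M -> Prop) :
  (forall w q, sat M (scons w (scons q tl)) E F <-> P q) ->
  exists X, forall q, mem M q X <-> P q.
Proof.
  intros HP. destruct (HD (fExN F) (fAllN F) HF HF tl E) as [X HX].
  - intros m; simpl. split.
    + intros [w Hw] w'. apply HP. exact (proj1 (HP w m) Hw).
    + intros H. exists z0. apply H.
  - exists X. intros q. rewrite HX. simpl. split.
    + intros [w Hw]. exact (proj1 (HP w q) Hw).
    + intros H. exists z0. apply HP, H.
Qed.

(* [X] codes the ternary relation [P] as the set of the codes <<i, j>, c> of its triples;
   the bounds on the decoded components keep this Delta^0_0. *)
Definition codes3 (X : SetS M) (P : Num M -> Num M -> Num M -> Prop) : Prop :=
  forall q, mem M q X <->
    forall p, p ≺ q ⊕ o1 -> forall i, i ≺ p ⊕ o1 -> forall j, j ≺ p ⊕ o1 ->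
    forall c, c ≺ q ⊕ o1 -> ispair i j p -> ispair p c q -> P i j c.

Lemma codes3_graph3 X P x y z : codes3 X P -> (graph3 M X x y z <-> P x y z).
Proof.
  intros HX. split.
  - intros [p [q [Hp [Hq HqX]]]].
    destruct (ispair_le _ _ _ Hp) as [Hx Hy]. destruct (ispair_le _ _ _ Hq) as [Hpq Hz].
    apply lt_succ_r in Hx, Hy, Hpq, Hz.
    exact (proj1 (HX q) HqX p Hpq x Hx y Hy z Hz Hp Hq).
  - intros HP. destruct (ispair_exists x y) as [p Hp]. destruct (ispair_exists p z) as [q Hq].
    exists p, q. split; auto. split; auto. apply (proj2 (HX q)).
    intros p' _ i _ j _ c _ H1 H2.
    destruct (ispair_inj _ _ _ _ _ Hq H2) as [<- <-].
    destruct (ispair_inj _ _ _ _ _ Hp H1) as [<- <-]. exact HP.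
Qed.

Definition ispairF (x y p : term) : formula :=
  fEq (tplus p p) (tplus (ttimes (tplus x y) (tplus (tplus x y) tone)) (tplus y y)).

Definition codes3F (body : formula) : formula :=
  fBAllN (tplus (tvar 1) tone) (fBAllN (tplus (tvar 0) tone) (fBAllN (tplus (tvar 1) tone)
    (fBAllN (tplus (tvar 4) tone)
      (fImp (ispairF (tvar 2) (tvar 1) (tvar 3)) (fImp (ispairF (tvar 3) (tvar 0) (tvar 5)) body))))).

Lemma Delta0_codes3_comprehension (body : formula) (Hbody : is_Delta0 body) (tl : nat -> Num M)
  (P : Num M -> Num M -> Num M -> Prop) :
  (forall c j i p w q,
     sat M (scons c (scons j (scons i (scons p (scons w (scons q tl)))))) E body <-> P i j c) ->
  exists X, codes3 X P.
Proof.
  intros HP. apply (Delta0_comprehension (codes3F body) ltac:(unfold codes3F; prove_Delta0) tl).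
  intros w q. unfold codes3F, Defs.ispair. cbn. setoid_rewrite HP. reflexivity.
Qed.

End Comprehension.

Definition is_min u v r := r ≺ u ⊕ o1 /\ r ≺ v ⊕ o1 /\ (r = u \/ r = v).

Lemma is_min_exists u v : exists r, is_min u v r.
Proof.
  destruct (lt_trichotomy u v) as [h|[h|h]].
  - exists u. split. apply lt_succ_diag_r. split. apply lt_lt_succ_r; auto. left; auto.
  - subst. exists v. split. apply lt_succ_diag_r. split. apply lt_succ_diag_r. left; auto.
  - exists v. split. apply lt_lt_succ_r; auto. split. apply lt_succ_diag_r. right; auto.
Qed.

Lemma is_min_le u v r : is_min u v r -> forall t, le t r <-> le t u /\ le t v.
Proof.
  intros [H1 [H2 H3]] t. apply lt_succ_r in H1. apply lt_succ_r in H2. split.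
  - intros H. split; eapply le_trans; eauto.
  - intros [Hu Hv]. destruct H3; subst; auto.
Qed.

Lemma le_ext_eq r r' : (forall t, le t r <-> le t r') -> r = r'.
Proof. intros H. apply le_antisymm; apply H, le_refl. Qed.

Lemma is_min_unique u v r r' : is_min u v r -> is_min u v r' -> r = r'.
Proof.
  intros H H'. apply le_ext_eq. intros t. rewrite (is_min_le _ _ _ H), (is_min_le _ _ _ H'). tauto.
Qed.
Lemma min_FinSemigroup (b : Num M) (U Op : SetS M) :
  (forall q, mem M q U <-> q ≺ b) -> codes3 Op is_min -> FinSemigroup M U Op.
Proof.
  intros HU HOp. assert (HOpE := fun u v r => codes3_graph3 Op is_min u v r HOp).
  split; [|split; [|split]].
  - exists b. intros x; apply HU.
  - intros u v Hu Hv. destruct (is_min_exists u v) as [r Hr]. exists r. split; [|apply HOpE, Hr].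
    destruct Hr as [_ [_ [->| ->]]]; assumption.
  - intros u v r r' _ _ H1 H2. apply HOpE in H1, H2. apply (is_min_unique u v); auto.
  - intros u v w uv vw uvw uvw' _ _ _ H1 H2 H3 H4.
    apply HOpE in H1, H2, H3, H4. apply le_ext_eq. intros t.
    rewrite (is_min_le _ _ _ H2), (is_min_le _ _ _ H1), (is_min_le _ _ _ H4), (is_min_le _ _ _ H3).
    tauto.
Qed.

(** * Approximations to the least witness *)

Section Sigma2.

Variable θ : formula.
Hypothesis Hθ : is_Delta0 θ.
Variable e : nat -> Num M.

Definition Theta x y z := sat M (scons z (scons y (scons x e))) E θ.

Definition Witnessed x := exists y, forall z, Theta x y z.

Lemma not_Witnessed_counterexample x : ~ Witnessed x -> forall y, exists z, ~ Theta x y z.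
Proof. intros Hx y. apply not_all_ex_not. intros Hy. apply Hx. exists y; exact Hy. Qed.

(* [Appr x s v]: v = g_s(x) is the least y < s with forall z < s, theta(x, y, z), and s
   if there is none -- the stage-s guess at the least witness of phi(x). *)
Definition Appr x s v :=
  v ≺ s ⊕ o1 /\ (forall y, y ≺ v -> exists z, z ≺ s /\ ~ Theta x y z) /\
  (v = s \/ forall z, z ≺ s -> Theta x v z).

Definition ApprF : formula :=
  fAnd (fLt (tvar 0) (tplus (tvar 1) tone))
   (fAnd (fBAllN (tvar 0) (fBExN (tvar 2) (fNot (ren_formula (reindex [0;1;4] 5) θ))))
         (fOr (fEq (tvar 0) (tvar 1)) (fBAllN (tvar 1) (ren_formula (reindex [0;1;3] 4) θ)))).

Lemma ApprF_spec v s x : sat M (scons v (scons s (scons x e))) E ApprF <-> Appr x s v.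
Proof. unfold ApprF. sat_simpl. reflexivity. Qed.

Lemma ApprF_Delta0 : is_Delta0 ApprF.
Proof. unfold ApprF. prove_Delta0. Qed.

Arguments ApprF : simpl never.

Lemma Appr_exists x s : exists v, Appr x s v.
Proof.
  set (good := fBAllN (tvar 1) (ren_formula (reindex [0;1;3] 4) θ)).
  assert (Hgood : forall y, sat M (scons y (scons s (scons x e))) E good <->
                            forall z, z ≺ s -> Theta x y z)
    by (intros y; unfold good; sat_simpl; reflexivity).
  destruct (classic (exists y, y ≺ s /\ sat M (scons y (scons s (scons x e))) E good))
    as [Hex|Hno].
  - destruct (Delta0_least good ltac:(unfold good; prove_Delta0) _ s Hex) as [v [Hv Hmin]].
    destruct Hex as [y0 [Hy0 G0]].
    assert (Hvs : v ≺ s).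
    { destruct (lt_trichotomy y0 v) as [h|[h|h]].
      - elim (Hmin _ h G0).
      - subst; auto.
      - eapply lt_trans; eauto. }
    exists v. split; [apply lt_lt_succ_r; auto | split].
    + intros y Hy. specialize (Hmin y Hy). rewrite Hgood in Hmin.
      apply not_all_ex_not in Hmin. destruct Hmin as [z Hz]. exists z. tauto.
    + right. apply Hgood, Hv.
  - exists s. split; [apply lt_succ_diag_r | split; [|left; auto]].
    intros y Hy. assert (Hq : ~ (forall z, z ≺ s -> Theta x y z)).
    { intros Hq. apply Hno. exists y. split; auto. apply Hgood, Hq. }
    apply not_all_ex_not in Hq. destruct Hq as [z Hz]. exists z. tauto.
Qed.

Lemma Appr_lt x s v : Appr x s v -> v ≺ s ⊕ o1.
Proof. intros [H _]; exact H. Qed.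

Lemma Appr_unique x s v v' : Appr x s v -> Appr x s v' -> v = v'.
Proof.
  assert (Hnlt : forall v v', Appr x s v -> Appr x s v' -> ~ v ≺ v').
  { intros u u' [H1 [_ H3]] [H1' [H2' _]] Hlt.
    destruct (H2' u Hlt) as [z [Hz Hn]].
    destruct H3 as [H3|H3].
    - subst. apply lt_succ_r in H1'. apply (le_not_lt _ _ H1' Hlt).
    - apply Hn, H3, Hz. }
  intros H H'. destruct (lt_trichotomy v v') as [h|[h|h]]; auto; exfalso.
  - apply (Hnlt _ _ H H' h).
  - apply (Hnlt _ _ H' H h).
Qed.

Lemma Appr_le_succ x s v v' : Appr x s v -> Appr x (s ⊕ o1) v' -> le v v'.
Proof.
  intros [H1 [H2 _]] [_ [_ H3']]. apply not_lt_le. intros Hlt.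
  destruct (H2 v' Hlt) as [z [Hz Hn]].
  apply lt_succ_r in H1.
  destruct H3' as [H3'|H3'].
  - subst. apply (le_not_lt _ _ H1). eapply lt_trans; [apply lt_succ_diag_r | exact Hlt].
  - apply Hn, H3', lt_lt_succ_r, Hz.
Qed.

(* Take the least stage t in (s, s'] with g_t(x) < g_s(x): then g decreases from t - 1 to t. *)
Lemma Appr_mono x s s' v v' : Appr x s v -> Appr x s' v' -> le s s' -> le v v'.
Proof.
  intros Hv Hv' Hss. apply not_lt_le. intros Hlt.
  set (below := fAnd (fNot (fLt (tvar 0) (tvar 1)))
    (fBExN (tplus (tvar 0) tone) (fAnd (ren_formula (reindex [0;1;4] 5) ApprF) (fLt (tvar 0) (tvar 3))))).
  assert (Hbelow : forall t, sat M (scons t (scons s (scons v (scons x e)))) E below <->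
                             ~ t ≺ s /\ exists u, u ≺ t ⊕ o1 /\ Appr x t u /\ u ≺ v)
    by (intros t; unfold below; sat_simpl; setoid_rewrite ApprF_spec; reflexivity).
  destruct (Delta0_least below ltac:(unfold below; prove_Delta0; apply ApprF_Delta0)
              (scons s (scons v (scons x e))) (s' ⊕ o1)) as [t [Ft Hmin]].
  { exists s'. split. apply lt_succ_diag_r. apply Hbelow. split. apply le_not_lt; auto.
    exists v'. split; auto. apply (Appr_lt _ _ _ Hv'). }
  apply Hbelow in Ft. destruct Ft as [Hts [u [_ [Hu Huv]]]].
  assert (Hst : s ≺ t).
  { apply not_lt_le in Hts. destruct Hts as [h|h]; auto. subst.
    rewrite (Appr_unique _ _ _ _ Hv Hu) in Huv. elim (lt_irrefl _ Huv). }
  destruct (zero_or_succ t) as [->|[t' ->]]. elim (nlt_0_r _ Hst).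
  apply lt_succ_r in Hst.
  destruct (Appr_exists x t') as [ut Hut].
  assert (Hnf := Hmin t' (lt_succ_diag_r t')). rewrite Hbelow in Hnf.
  assert (Hvut : le v ut).
  { apply not_lt_le. intros h. apply Hnf. split. apply le_not_lt; auto.
    exists ut. split; auto. apply (Appr_lt _ _ _ Hut). }
  apply (le_not_lt _ _ (le_trans _ _ _ Hvut (Appr_le_succ _ _ _ _ Hut Hu)) Huv).
Qed.

Lemma Appr_le_witness x s v y : Appr x s v -> (forall z, Theta x y z) -> le v y.
Proof.
  intros [_ [H2 _]] Hy. apply not_lt_le. intros Hlt.
  destruct (H2 y Hlt) as [z [_ Hz]]. apply Hz, Hy.
Qed.

Definition Moves x s := exists v v', Appr x s v /\ Appr x (s ⊕ o1) v' /\ v ≺ v'.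

Definition MovesF : formula :=
  fBExN (tplus (tvar 0) tone)
   (fBExN (tplus (tplus (tvar 1) tone) tone)
     (fBExN (tplus (tplus (tvar 2) tone) tone)
        (fAnd (fEq (tvar 0) (tplus (tvar 3) tone))
         (fAnd (ren_formula (reindex [2;3;4] 5) ApprF)
          (fAnd (ren_formula (reindex [1;0;4] 5) ApprF) (fLt (tvar 2) (tvar 1))))))).

Lemma MovesF_spec s x : sat M (scons s (scons x e)) E MovesF <-> Moves x s.
Proof.
  unfold MovesF. sat_simpl. setoid_rewrite ApprF_spec. split.
  - intros (v & _ & v' & _ & s' & _ & -> & Hv & Hv' & Hlt). exists v, v'. auto.
  - intros (v & v' & Hv & Hv' & Hlt).
    exists v. split; [apply (Appr_lt _ _ _ Hv)|]. exists v'. split; [apply (Appr_lt _ _ _ Hv')|].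
    exists (s ⊕ o1). split; [apply lt_succ_diag_r|]. auto.
Qed.

Lemma MovesF_Delta0 : is_Delta0 MovesF.
Proof. unfold MovesF. prove_Delta0; apply ApprF_Delta0. Qed.

Arguments MovesF : simpl never.

Lemma Moves_lt x s v v' : Moves x s -> Appr x s v -> Appr x (s ⊕ o1) v' -> v ≺ v'.
Proof.
  intros (u & u' & Hu & Hu' & Hlt) Hv Hv'.
  rewrite (Appr_unique _ _ _ _ Hv Hu), (Appr_unique _ _ _ _ Hv' Hu'). exact Hlt.
Qed.

(* Sigma^0_1 collection for the counterexamples below a bound. *)
Lemma not_Witnessed_collection x : ~ Witnessed x ->
  forall v, exists b, forall y, y ≺ v -> exists z, z ≺ b /\ ~ Theta x y z.
Proof.
  intros Hx. pose proof (not_Witnessed_counterexample x Hx) as Hce.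
  ind_Sigma1 (fBAllN (tvar 1) (fBExN (tvar 1) (fNot (ren_formula (reindex [0;1;4] 5) θ))))
    (scons x e).
  - intros n. sat_simpl. reflexivity.
  - exists z0. intros y H. elim (nlt_0_r _ H).
  - intros v [b Hb]. destruct (Hce v) as [z Hz]. exists (b ⊕ z ⊕ o1).
    intros y Hy. apply lt_succ_disj in Hy. destruct Hy as [Hy|Hy].
    + destruct (Hb y Hy) as [z' [Hz' Hn]]. exists z'. split; auto.
      eapply lt_le_trans. exact Hz'. rewrite add_assoc. apply le_add_r.
    + subst. exists z. split; auto. apply lt_succ_r. rewrite add_comm. apply le_add_r.
Qed.

Lemma not_Witnessed_Appr_unbounded x : ~ Witnessed x ->
  forall v n, exists s, ~ s ≺ n /\ exists u, Appr x s u /\ v ≺ u.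
Proof.
  intros Hx v n. destruct (not_Witnessed_collection x Hx (v ⊕ o1)) as [b Hb].
  set (s := b ⊕ v ⊕ n ⊕ o1).
  exists s. split.
  - apply le_not_lt. left. apply lt_succ_r. unfold s.
    replace (b ⊕ v ⊕ n) with (n ⊕ (b ⊕ v)) by ring. apply le_add_r.
  - destruct (Appr_exists x s) as [u Hu]. exists u. split; auto.
    apply NNPP. intros Hn. apply not_lt_le in Hn.
    destruct (Hb u) as [z [Hz Hnz]]. apply lt_succ_r; auto.
    destruct Hu as [_ [_ [Hus|Hus]]].
    + assert (Hl : le s v) by (rewrite <- Hus; auto).
      apply (le_not_lt _ _ Hl). unfold s. apply lt_succ_r.
      replace (b ⊕ v ⊕ n) with (v ⊕ (b ⊕ n)) by ring. apply le_add_r.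
    + apply Hnz, Hus. eapply lt_le_trans. exact Hz.
      unfold s. rewrite !add_assoc. apply le_add_r.
Qed.

(* The least stage s >= n with g_s(x) > g_n(x) is preceded by a move. *)
Lemma Moves_of_Appr_increase x n v :
  Appr x n v -> (exists s, ~ s ≺ n /\ exists u, Appr x s u /\ v ≺ u) ->
  exists s, ~ s ≺ n /\ Moves x s.
Proof.
  intros Hn [s0 [Hs0 [u0 [Hu0 Hv0]]]].
  set (above := fAnd (fNot (fLt (tvar 0) (tvar 1)))
    (fBExN (tplus (tvar 0) tone) (fAnd (ren_formula (reindex [0;1;4] 5) ApprF) (fLt (tvar 3) (tvar 0))))).
  assert (Habove : forall s, sat M (scons s (scons n (scons v (scons x e)))) E above <->
                             ~ s ≺ n /\ exists u, u ≺ s ⊕ o1 /\ Appr x s u /\ v ≺ u)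
    by (intros s; unfold above; sat_simpl; setoid_rewrite ApprF_spec; reflexivity).
  destruct (Delta0_least above ltac:(unfold above; prove_Delta0; apply ApprF_Delta0)
              (scons n (scons v (scons x e))) (s0 ⊕ o1)) as [s [Fs Hmin]].
  { exists s0. split. apply lt_succ_diag_r. apply Habove. split; auto.
    exists u0. split; auto. apply (Appr_lt _ _ _ Hu0). }
  apply Habove in Fs. destruct Fs as [Hsn [u [_ [Hu Hvu]]]].
  assert (Hns : n ≺ s).
  { apply not_lt_le in Hsn. destruct Hsn as [h|h]; auto. subst.
    rewrite (Appr_unique _ _ _ _ Hn Hu) in Hvu. elim (lt_irrefl _ Hvu). }
  destruct (zero_or_succ s) as [->|[t ->]]. elim (nlt_0_r _ Hns).
  apply lt_succ_r in Hns.
  exists t. split. apply le_not_lt; auto.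
  destruct (Appr_exists x t) as [ut Hut]. exists ut, u. split; auto. split; auto.
  assert (Hnf := Hmin t (lt_succ_diag_r t)). rewrite Habove in Hnf.
  assert (Hutv : le ut v).
  { apply not_lt_le. intros h. apply Hnf. split. apply le_not_lt; auto.
    exists ut. split; auto. apply (Appr_lt _ _ _ Hut). }
  eapply le_lt_trans; eauto.
Qed.

Lemma not_Witnessed_Moves_unbounded x : ~ Witnessed x -> forall n, exists s, ~ s ≺ n /\ Moves x s.
Proof.
  intros Hx n. destruct (Appr_exists x n) as [v Hv].
  apply (Moves_of_Appr_increase x n v Hv), not_Witnessed_Appr_unbounded, Hx.
Qed.

(* Each move raises g(x), so unboundedly many moves push g_s(x) past any witness y. *)
Lemma Moves_unbounded_not_Witnessed x : (forall n, exists s, ~ s ≺ n /\ Moves x s) -> ~ Witnessed x.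
Proof.
  intros Hinf [y Hy].
  assert (Hgrow : forall k, exists s u, u ≺ s ⊕ o1 /\ Appr x s u /\ ~ u ≺ k).
  { ind_Sigma1 (fBExN (tplus (tvar 0) tone)
                  (fAnd (ren_formula (reindex [0;1;3] 4) ApprF) (fNot (fLt (tvar 0) (tvar 2)))))
      (scons x e).
    - intros k. sat_simpl. setoid_rewrite ApprF_spec. reflexivity.
    - destruct (Appr_exists x z0) as [u Hu]. exists z0, u.
      split. apply (Appr_lt _ _ _ Hu). split; auto. apply nlt_0_r.
    - intros k [s [u [_ [Hu Hku]]]].
      destruct (Hinf s) as [s' [Hs' Hmove]].
      destruct (Appr_exists x s') as [w Hw]. destruct (Appr_exists x (s' ⊕ o1)) as [w' Hw'].
      assert (Hww := Moves_lt _ _ _ _ Hmove Hw Hw').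
      assert (Huw := Appr_mono _ _ _ _ _ Hu Hw (not_lt_le _ _ Hs')).
      exists (s' ⊕ o1), w'. split. apply (Appr_lt _ _ _ Hw'). split; auto.
      apply le_not_lt, le_succ_l. eapply le_lt_trans. apply not_lt_le; exact Hku.
      eapply le_lt_trans; eauto. }
  destruct (Hgrow (y ⊕ o1)) as [s [u [_ [Hu Hnu]]]].
  apply Hnu, lt_succ_r, (Appr_le_witness _ _ _ _ Hu Hy).
Qed.

(** * The additive colouring *)

Section Colouring.

Variable a : Num M.

Definition Col c i j :=
  c ≺ a ⊕ o1 ⊕ o1 /\
  (forall x, x ≺ c -> forall s, s ≺ j -> ~ s ≺ i -> ~ Moves x s) /\
  (c = a ⊕ o1 \/ exists s, s ≺ j /\ ~ s ≺ i /\ Moves c s).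

Definition ColF : formula :=
  fAnd (fLt (tvar 0) (tplus (tplus (tvar 3) tone) tone))
   (fAnd (fBAllN (tvar 0) (fBAllN (tvar 3)
            (fImp (fNot (fLt (tvar 0) (tvar 3))) (fNot (ren_formula (reindex [0;1] 6) MovesF)))))
         (fOr (fEq (tvar 0) (tplus (tvar 3) tone))
              (fBExN (tvar 2) (fAnd (fNot (fLt (tvar 0) (tvar 2))) (ren_formula (reindex [0;1] 5) MovesF))))).

Lemma ColF_spec c i j : sat M (scons c (scons i (scons j (scons a e)))) E ColF <-> Col c i j.
Proof. unfold ColF. sat_simpl. setoid_rewrite MovesF_spec. reflexivity. Qed.

Lemma ColF_Delta0 : is_Delta0 ColF.
Proof. unfold ColF. prove_Delta0; apply MovesF_Delta0. Qed.

Arguments ColF : simpl never.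

Lemma Col_exists i j : exists c, Col c i j.
Proof.
  set (moves_in := fBExN (tvar 2) (fAnd (fNot (fLt (tvar 0) (tvar 2))) (ren_formula (reindex [0;1] 4) MovesF))).
  assert (Hmoves_in : forall x, sat M (scons x (scons i (scons j e))) E moves_in <->
                                exists s, s ≺ j /\ ~ s ≺ i /\ Moves x s)
    by (intros x; unfold moves_in; sat_simpl; setoid_rewrite MovesF_spec; reflexivity).
  destruct (classic (exists x, x ≺ a ⊕ o1 /\ sat M (scons x (scons i (scons j e))) E moves_in))
    as [Hex|Hno].
  - destruct (Delta0_least moves_in ltac:(unfold moves_in; prove_Delta0; apply MovesF_Delta0) _ _ Hex)
      as [c [Hc Hmin]].
    destruct Hex as [x0 [Hx0 F0]].
    assert (Hca : c ≺ a ⊕ o1).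
    { destruct (lt_trichotomy x0 c) as [h|[h|h]].
      - elim (Hmin _ h F0).
      - subst; auto.
      - eapply lt_trans; eauto. }
    exists c. split; [apply lt_lt_succ_r; auto | split].
    + intros x Hx s Hs Hsi Hmove. apply (Hmin x Hx), Hmoves_in. exists s; auto.
    + right. apply Hmoves_in, Hc.
  - exists (a ⊕ o1). split; [apply lt_succ_diag_r | split; [|left; auto]].
    intros x Hx s Hs Hsi Hmove. apply Hno. exists x. split; auto. apply Hmoves_in. exists s; auto.
Qed.

Lemma Col_unique c c' i j : Col c i j -> Col c' i j -> c = c'.
Proof.
  assert (Hnlt : forall c c', Col c i j -> Col c' i j -> ~ c ≺ c').
  { intros d d' [_ [_ H3]] [H1' [H2' _]] Hlt.
    destruct H3 as [H3|[s [Hs [Hsi Hmove]]]].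
    - subst. apply lt_succ_r in H1'. apply (le_not_lt _ _ H1' Hlt).
    - apply (H2' d Hlt s Hs Hsi Hmove). }
  intros H H'. destruct (lt_trichotomy c c') as [h|[h|h]]; auto; exfalso.
  - apply (Hnlt _ _ H H' h).
  - apply (Hnlt _ _ H' H h).
Qed.

Lemma Col_additive i j k c1 c2 d : i ≺ j -> j ≺ k ->
  Col c1 i j -> Col c2 j k -> is_min c1 c2 d -> Col d i k.
Proof.
  intros Hij Hjk [C1 [C2 C3]] [D1 [D2 D3]] Hm.
  destruct (proj1 (is_min_le _ _ _ Hm d) (le_refl d)) as [Hd1 Hd2].
  split; [|split].
  - destruct Hm as [_ [_ [->| ->]]]; auto.
  - intros x Hx s Hs Hsi. destruct (classic (s ≺ j)) as [h|h].
    + apply C2; auto. eapply lt_le_trans; eauto.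
    + apply D2; auto. eapply lt_le_trans; eauto.
  - destruct Hm as [_ [_ [->| ->]]].
    + destruct C3 as [C3|[s [Hs [Hsi Hmove]]]]; auto.
      right. exists s. split; auto. eapply lt_trans; eauto.
    + destruct D3 as [D3|[s [Hs [Hsi Hmove]]]]; auto.
      right. exists s. split; auto. split; auto. intros h. apply Hsi. eapply lt_trans; eauto.
Qed.

Definition ColGraph i j c := i ≺ j -> Col c i j.

Lemma Col_Colouring (U C : SetS M) :
  (forall q, mem M q U <-> q ≺ a ⊕ o1 ⊕ o1) -> codes3 C ColGraph -> Colouring M U C.
Proof.
  intros HU HC. assert (HCE := fun i j c => codes3_graph3 C ColGraph i j c HC).
  split.
  - intros i j Hij. destruct (Col_exists i j) as [c Hc]. exists c. split.
    + apply HU, Hc.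
    + apply HCE. intros _; exact Hc.
  - intros i j c c' Hij H1 H2. apply HCE in H1, H2. apply (Col_unique c c' i j); auto.
Qed.

Lemma Col_Additive (Op C : SetS M) :
  codes3 Op is_min -> codes3 C ColGraph -> Additive M Op C.
Proof.
  intros HOp HC i j k u v d Hij Hjk H1 H2 H3.
  apply (codes3_graph3 _ _ _ _ _ HC) in H1, H2, H3.
  destruct (is_min_exists u v) as [r Hr].
  assert (Hd := Col_additive _ _ _ _ _ _ Hij Hjk (H1 Hij) (H2 Hjk) Hr).
  rewrite (Col_unique _ _ _ _ (H3 (lt_trans _ _ _ Hij Hjk)) Hd).
  apply (codes3_graph3 _ _ _ _ _ HOp), Hr.
Qed.

Section Homogeneous.

Variables (I : SetS M) (c : Num M).
Hypothesis HInf : Infinite M I.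
Hypothesis Hhom : forall i j, mem M i I -> mem M j I -> i ≺ j -> Col c i j.

Lemma homogeneous_Witnessed_below x : x ≺ c -> Witnessed x.
Proof.
  intros Hx. destruct (HInf z0) as [i0 [_ Hi0]]. apply NNPP. intros Hnx.
  destruct (not_Witnessed_Moves_unbounded x Hnx i0) as [s [Hs Hmove]].
  destruct (HInf (s ⊕ o1)) as [j [Hj HjI]].
  assert (Hsj : s ≺ j) by (eapply lt_le_trans; [apply lt_succ_diag_r | exact Hj]).
  assert (Hij : i0 ≺ j) by (eapply le_lt_trans; [apply not_lt_le; exact Hs | exact Hsj]).
  destruct (Hhom _ _ Hi0 HjI Hij) as [_ [Hnomove _]].
  exact (Hnomove x Hx s Hsj Hs Hmove).
Qed.

Lemma homogeneous_not_Witnessed : c <> a ⊕ o1 -> ~ Witnessed c.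
Proof.
  intros Hca. apply Moves_unbounded_not_Witnessed. intros n.
  destruct (HInf n) as [i [Hni HiI]]. destruct (HInf (i ⊕ o1)) as [j [Hj HjI]].
  assert (Hij : i ≺ j) by (eapply lt_le_trans; [apply lt_succ_diag_r | exact Hj]).
  destruct (Hhom _ _ HiI HjI Hij) as [_ [_ [Hc|[s [Hs [Hsi Hmove]]]]]].
  - elim (Hca Hc).
  - exists s. split; auto. intros h. apply Hsi. eapply lt_le_trans; eauto.
Qed.

End Homogeneous.

End Colouring.

Lemma ART_Witnessed_induction (HD : Delta01CA M) (HART : ART M) (a : Num M) :
  Witnessed z0 -> (forall x, Witnessed x -> Witnessed (x ⊕ o1)) -> Witnessed a.
Proof.
  intros H0 HS.
  destruct (Delta0_comprehension HD (fLt (tvar 1) (tplus (tplus (tvar 2) tone) tone)) ltac:(prove_Delta0)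
              (scons a e) (fun q => q ≺ a ⊕ o1 ⊕ o1)) as [U HU].
  { intros w q; reflexivity. }
  destruct (Delta0_codes3_comprehension HD
              (fAnd (fLt (tvar 0) (tplus (tvar 2) tone))
                 (fAnd (fLt (tvar 0) (tplus (tvar 1) tone)) (fOr (fEq (tvar 0) (tvar 2)) (fEq (tvar 0) (tvar 1)))))
              ltac:(prove_Delta0) e is_min) as [Op HOp].
  { intros; reflexivity. }
  destruct (Delta0_codes3_comprehension HD
              (fImp (fLt (tvar 2) (tvar 1)) (ren_formula (reindex [0;2;1;6] 7) ColF))
              ltac:(prove_Delta0; apply ColF_Delta0) (scons a e) (ColGraph a)) as [C HC].
  { intros. cbn -[ColF]. rewrite sat_reindex. cbn -[ColF]. setoid_rewrite ColF_spec. reflexivity. }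
  destruct (HART U Op C (min_FinSemigroup _ U Op HU HOp) (Col_Colouring a U C HU HC)
              (Col_Additive a Op C HOp HC)) as (I & c & _ & HInf & Hhom).
  assert (Hhom' : forall i j, mem M i I -> mem M j I -> i ≺ j -> Col a c i j).
  { intros i j Hi Hj Hij. exact (proj1 (codes3_graph3 _ _ _ _ _ HC) (Hhom i j Hi Hj Hij) Hij). }
  destruct (classic (c = a ⊕ o1)) as [Hca|Hca].
  - apply (homogeneous_Witnessed_below a I c HInf Hhom'). rewrite Hca. apply lt_succ_diag_r.
  - exfalso. apply (homogeneous_not_Witnessed a I c HInf Hhom' Hca).
    destruct (zero_or_succ c) as [->|[c' ->]]; [exact H0|].
    apply HS, (homogeneous_Witnessed_below a I _ HInf Hhom'), lt_succ_diag_r.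
Qed.

End Sigma2.

End Development.

Theorem mainTheorem5 (M : L2structure) :
  RCA0 M -> ART M -> SigmaIND 2 M.
Proof.
  intros [HB [HI HD]] HART phi Hphi e E H0 HS m.
  destruct phi as [| | | | | | | | phi | |]; simpl in Hphi; try contradiction.
  destruct phi as [| | | | | | | θ | | |]; simpl in Hphi; try contradiction.
  exact (ART_Witnessed_induction M HB HI E θ Hphi e HD HART m H0 HS).
Qed.
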